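(* For $k\geq 1$ let $p(k)$ be the probability that two independent uniformly random permutations $\sigma,\sigma'\in S_{2k}$, each of cycle type $(2^k)$ (i.e. fixed-point-free involutions), generate a transitive subgroup of $S_{2k}$. Then $p(k)\asymp k^{-1/2}$, i.e. there are absolute constants $0<a<b$ with $a k^{-1/2}\leq p(k)\leq b k^{-1/2}$ for all $k\geq 1$. *)

From HB Require Import structures.
From mathcomp Require Import all_boot all_order all_algebra all_fingroup.
Set Implicit Arguments. Unset Strict Implicit. Unset Printing Implicit Defensive.
Import Order.TTheory GRing.Theory Num.Theory.

Definition fpf_involution n (s : 'S_n) : bool :=
  (s * s == 1)%g && [forall i, s i != i].

Definition fpf_pairs k : {set 'S_(k.*2) * 'S_(k.*2)} :=
  [set x | fpf_involution x.1 && fpf_involution x.2].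

Definition transitive_fpf_pairs k : {set 'S_(k.*2) * 'S_(k.*2)} :=
  [set x in fpf_pairs k |
     [transitive <<[set x.1; x.2]>>%g, on [set: 'I_(k.*2)] | 'P]].

Definition p_trans (R : numFieldType) (k : nat) : R :=
  (#|transitive_fpf_pairs k|%:R / #|fpf_pairs k|%:R)%R.

From mathcomp Require Import all_boot all_order all_algebra all_fingroup ring lra.
Set Implicit Arguments. Unset Strict Implicit. Unset Printing Implicit Defensive.

(* View the 2-cycles of s and t as the edges of a 2-regular multigraph on
   'I_(2k): <<[set s; t]>> is transitive iff this graph is connected.  Fix a
   point a and let b = s a.  If t a = b, then {a, b} is a component, so the
   graph is connected only when there are two points.  Otherwise, deleting the
   2-cycle (a b) of s and replacing the 2-cycles (a c), (b d) of t by (c d)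
   contracts the edge a-b without changing connectivity, and this is a
   bijection onto the connected pairs on the 2k - 2 other points together with
   the choice of c.  Hence there are (2k-1)! connected pairs among
   ((2k-1)!!)^2 pairs, so p(k+1) = p(k) 2k/(2k+1) and p(1) = 1, and induction
   gives k p(k)^2 <= 1 <= (2k-1) p(k)^2. *)

Lemma card_in_bij (U V : finType) (X : {set U}) (Y : {set V}) f g :
  {in X, forall u, f u \in Y} -> {in Y, forall v, g v \in X} ->
  {in X, cancel f g} -> {in Y, cancel g f} -> #|X| = #|Y|.
Proof.
move=> fXY gYX fK gK; rewrite -(card_in_imset (can_in_inj fK)).
apply: eq_card => y; apply/imsetP/idP => [[u Xu ->]|Yy]; first exact: fXY.
by exists (g y); rewrite ?gK ?gYX.
Qed.

Lemma card_fibers (U V : finType) (X : {set U}) (Y : {set V}) (f : U -> V) :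
  {in X, forall u, f u \in Y} -> #|X| = \sum_(v in Y) #|[set u in X | f u == v]|.
Proof.
move=> fXY; rewrite -sum1_card (partition_big f (mem Y)) //=.
by apply: eq_bigr => v _; rewrite sum1dep_card.
Qed.

Lemma setUD_subset (T : finType) (A B : {set T}) : A \subset B -> A :|: (B :\: A) = B.
Proof. by move=> /setIidPr sAB; rewrite -{1}sAB setID. Qed.

Lemma cardsD1_mem (T : finType) (A : {set T}) a : a \in A -> #|A :\ a| = #|A|.-1.
Proof. by move=> aA; rewrite (cardsD1 a A) aA. Qed.

Lemma cardsD2_mem (T : finType) (A : {set T}) a b :
  a \in A -> b \in A :\ a -> #|A :\: [set a; b]| = #|A| - 2.
Proof.
move=> aA /setD1P[ba bA]; rewrite cardsD (setIidPr _) ?cards2 1?eq_sym ?ba //.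
by apply/subsetP=> x /set2P[]->.
Qed.

(** * Fixed-point-free involutions on a subset *)

Section FpfInvolutions.
Local Open Scope group_scope.
Variable T : finType.
Implicit Types (A B : {set T}) (s t : {perm T}) (a b x : T).

Definition fpf_involution_on A s := (s * s == 1) && ([set x | s x != x] == A).

Lemma fpf_involution_onP A s :
  reflect (involutive s /\ forall x, (s x != x) = (x \in A)) (fpf_involution_on A s).
Proof.
apply: (iffP andP) => [[/eqP ss /eqP <-]|[ss sA]].
  by split=> x; rewrite ?inE // -permM ss perm1.
split; first by apply/eqP/permP=> x; rewrite permM perm1 ss.
by apply/eqP/setP=> x; rewrite inE sA.
Qed.

Section OneInvolution.
Variables (A : {set T}) (s : {perm T}).
Hypothesis sA : fpf_involution_on A s.

Lemma fpf_involution_onK : involutive s.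
Proof. by case/fpf_involution_onP: sA. Qed.

Lemma fpf_involution_on_neq x : (s x != x) = (x \in A).
Proof. by case/fpf_involution_onP: sA. Qed.

Lemma fpf_involution_on_mem x : (s x \in A) = (x \in A).
Proof. by rewrite -!fpf_involution_on_neq fpf_involution_onK eq_sym. Qed.

Lemma fpf_involution_on_out x : x \notin A -> s x = x.
Proof. by rewrite -fpf_involution_on_neq negbK => /eqP. Qed.

End OneInvolution.

Lemma tperm_out a b x : x \notin [set a; b] -> tperm a b x = x.
Proof. by rewrite in_set2 negb_or => /andP[xa xb]; rewrite tpermD // eq_sym. Qed.

Lemma mulg_tperm_out s a b x :
  s x \notin [set a; b] -> (s * tperm a b) x = s x.
Proof. by rewrite permM => /tperm_out. Qed.

Section InvolutionTperm.
Variable s : {perm T}.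
Hypothesis sK : involutive s.

Lemma mem_set2_swap a x : (s x \in [set a; s a]) = (x \in [set a; s a]).
Proof. by rewrite !in_set2 (inv_eq sK) (inj_eq perm_inj) orbC. Qed.

Lemma mem_set2_fix a b x : s a = a -> s b = b ->
  (s x \in [set a; b]) = (x \in [set a; b]).
Proof. by move=> sa sb; rewrite !in_set2 !(inv_eq sK) sa sb. Qed.

End InvolutionTperm.

Lemma fpf_involution_on_setD2 A s a :
  fpf_involution_on A s -> a \in A ->
  fpf_involution_on (A :\: [set a; s a]) (s * tperm a (s a)).
Proof.
move=> sA aA; have sK := fpf_involution_onK sA.
have uE x : x \notin [set a; s a] -> (s * tperm a (s a)) x = s x.
  by move=> xab; rewrite mulg_tperm_out // mem_set2_swap.
have ua : (s * tperm a (s a)) a = a by rewrite permM tpermR.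
have ub : (s * tperm a (s a)) (s a) = s a by rewrite permM sK tpermL.
apply/fpf_involution_onP; split=> x; rewrite ?in_setD;
  have [/set2P[]->|xab] := boolP (x \in [set a; s a]).
- by rewrite !ua.
- by rewrite !ub.
- by rewrite !uE ?sK // mem_set2_swap.
- by rewrite ua eqxx.
- by rewrite ub eqxx.
- by rewrite uE // (fpf_involution_on_neq sA).
Qed.

Lemma fpf_involution_on_setU2 A s a b :
  fpf_involution_on A s -> a \notin A -> b \notin A -> a != b ->
  fpf_involution_on ([set a; b] :|: A) (s * tperm a b).
Proof.
move=> sA aA bA ab; have sK := fpf_involution_onK sA.
have [sa sb] := (fpf_involution_on_out sA aA, fpf_involution_on_out sA bA).
have uE x : x \notin [set a; b] -> (s * tperm a b) x = s x.
  by move=> xab; rewrite mulg_tperm_out // mem_set2_fix.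
have ua : (s * tperm a b) a = b by rewrite permM sa tpermL.
have ub : (s * tperm a b) b = a by rewrite permM sb tpermR.
apply/fpf_involution_onP; split=> x;
  have [/set2P[]->|xab] := boolP (x \in [set a; b]).
- by rewrite ua ub.
- by rewrite ub ua.
- by rewrite !uE ?sK // mem_set2_fix.
- by rewrite ua in_setU set21 eq_sym ab.
- by rewrite ub in_setU set22 ab.
- by rewrite uE // in_setU (negbTE xab) (fpf_involution_on_neq sA).
Qed.

(* [join_pairs t a b] replaces the 2-cycles (a, t a) and (b, t b) of t by the
   single 2-cycle (t a, t b); [split_pair t a b c] undoes this, c becoming t a. *)
Definition join_pairs t a b := t * tperm a (t a) * tperm b (t b) * tperm (t a) (t b).
Definition split_pair t a b c := t * tperm c (t c) * tperm b (t c) * tperm a c.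

Section JoinSplit.
Variables (A : {set T}) (a b : T).
Hypotheses (aA : a \in A) (bA : b \in A) (ab : a != b).

Lemma join_pairs_out t x : involutive t ->
  x \notin [set a; b] -> x \notin [set t a; t b] -> join_pairs t a b x = t x.
Proof.
move=> tK; rewrite !in_set2 !negb_or.
move=> /andP[/negbTE xa /negbTE xb] /andP[/negbTE xc /negbTE xd].
rewrite /join_pairs !permM !tperm_out // ?mem_set2_swap //.
all: by rewrite !in_set2 ?(inj_eq perm_inj) ?xa ?xb ?xc ?xd.
Qed.

Lemma join_pairs_at t : involutive t -> t a != b -> join_pairs t a b (t a) = t b.
Proof.
move=> tK tab; rewrite /join_pairs !permM tK tpermL [tperm b _ _]tpermD ?tpermL 1?eq_sym //.
by rewrite (inj_eq perm_inj).
Qed.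

Lemma fpf_involution_on_join t : fpf_involution_on A t -> t a != b ->
  fpf_involution_on (A :\: [set a; b]) (join_pairs t a b).
Proof.
move=> tA tab; have tK := fpf_involution_onK tA.
have tba : t b != a by apply: contra tab => /eqP <-; rewrite tK.
have bac : b \notin [set a; t a] by rewrite in_set2 negb_or ![b == _]eq_sym ab tab.
have t1A := fpf_involution_on_setD2 tA aA.
have bA1 : b \in A :\: [set a; t a] by rewrite in_setD bac bA.
have t1b : (t * tperm a (t a)) b = t b by rewrite mulg_tperm_out // mem_set2_swap.
have := fpf_involution_on_setD2 t1A bA1; rewrite t1b => t2A.
have tatb : t a != t b by rewrite (inj_eq perm_inj).
have := fpf_involution_on_setU2 t2A _ _ tatb; rewrite !inE !eqxx !orbT /= !andbF => /(_ isT isT).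
rewrite !setDDl setUACA -setDDl setUD_subset //.
apply/subsetP=> x /set2P[]->; rewrite in_setD in_set2 negb_or (fpf_involution_on_mem tA).
  by rewrite (fpf_involution_on_neq tA) aA tab.
by rewrite tba (fpf_involution_on_neq tA) bA.
Qed.

Lemma fpf_involution_on_split t c :
  fpf_involution_on (A :\: [set a; b]) t -> c \in A :\: [set a; b] ->
  fpf_involution_on A (split_pair t a b c).
Proof.
move=> tA cA'; have dA' : t c \in A :\: [set a; b] by rewrite (fpf_involution_on_mem tA).
move: (cA') (dA') => /setDP[cA]; rewrite in_set2 negb_or => /andP[ca cb].
move=> /setDP[dA]; rewrite in_set2 negb_or => /andP[da db].
have cd : c != t c by rewrite eq_sym (fpf_involution_on_neq tA).
have t1A := fpf_involution_on_setD2 tA cA'.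
have t2A : fpf_involution_on ([set b; t c] :|: (A :\: [set a; b] :\: [set c; t c]))
                             (t * tperm c (t c) * tperm b (t c)).
  by apply: fpf_involution_on_setU2; rewrite 1?eq_sym // !in_setD ?set21 ?set22 ?andbF.
have ac : a != c by rewrite eq_sym.
have := fpf_involution_on_setU2 t2A _ _ ac.
rewrite !inE !eqxx /= !andbF !orbF (negbTE ab) [a == t c]eq_sym (negbTE da) (negbTE cb) (negbTE cd).
move=> /(_ isT isT); rewrite setUA setUACA -setUA !setUD_subset //.
  by apply/subsetP=> x /set2P[]->.
by apply/subsetP=> x /set2P[]->.
Qed.

Lemma split_pair_at t c :
  fpf_involution_on (A :\: [set a; b]) t -> c \in A :\: [set a; b] ->
  split_pair t a b c a = c /\ split_pair t a b c b = t c.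
Proof.
move=> tA cA'; have dA' : t c \in A :\: [set a; b] by rewrite (fpf_involution_on_mem tA).
move: (cA') (dA') => /setDP[_]; rewrite in_set2 negb_or => /andP[ca cb].
move=> /setDP[_]; rewrite in_set2 negb_or => /andP[da db].
have [ta tb] : t a = a /\ t b = b.
  by split; apply: (fpf_involution_on_out tA); rewrite in_setD ?set21 ?set22.
have cd : c != t c by rewrite eq_sym (fpf_involution_on_neq tA).
rewrite /split_pair !permM ta tb (tpermD ca da) (tpermD cb db) tpermL.
by rewrite (tpermD _ da) 1?eq_sym // tpermL (tpermD _ cd) 1?eq_sym.
Qed.

Lemma join_pairsK t : involutive t -> t a != b ->
  split_pair (join_pairs t a b) a b (t a) = t.
Proof.
move=> tK tab; rewrite /split_pair join_pairs_at //.
by apply/permP=> x; rewrite /join_pairs !permM !tpermK.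
Qed.

Lemma split_pairK t c :
  fpf_involution_on (A :\: [set a; b]) t -> c \in A :\: [set a; b] ->
  join_pairs (split_pair t a b c) a b = t.
Proof.
move=> tA cA'; rewrite /join_pairs; have [-> ->] := split_pair_at tA cA'.
by apply/permP=> x; rewrite /split_pair !permM !tpermK.
Qed.

End JoinSplit.

(** * Connectivity of a pair of involutions *)

Definition closed_under s t B := [forall x in B, (s x \in B) && (t x \in B)].

Definition connected_on A s t := [forall B : {set T},
  [&& B \subset A, B != set0 & closed_under s t B] ==> (B == A)].

Lemma closed_underP s t B :
  reflect (forall x, x \in B -> s x \in B /\ t x \in B) (closed_under s t B).
Proof. by apply: (iffP forall_inP) => [cl x /cl/andP[]|cl x /cl[-> ->]]. Qed.

Lemma connected_onP A s t :
  reflect (forall B, B \subset A -> B != set0 -> closed_under s t B -> B = A)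
          (connected_on A s t).
Proof.
apply: (iffP forallP) => [conn B BA B0 clB|conn B].
  by apply/eqP; rewrite (implyP (conn B)) // BA B0.
by apply/implyP=> /and3P[BA B0 clB]; rewrite (conn B).
Qed.

Lemma closed_under_mem s t B x : involutive s -> involutive t -> closed_under s t B ->
  (s x \in B) = (x \in B) /\ (t x \in B) = (x \in B).
Proof.
move=> sK tK /closed_underP cl; split; apply/idP/idP => [/cl[]|/cl[]//].
  by rewrite sK.
by rewrite tK.
Qed.

Lemma transitive_connected (x0 : T) s t :
  [transitive <<[set s; t]>>, on [set: T] | 'P] = connected_on [set: T] s t.
Proof.
set G := <<[set s; t]>>; have sG : s \in G by rewrite mem_gen ?set21.
have tG : t \in G by rewrite mem_gen ?set22.
apply/idP/connected_onP => [trG B _ /set0Pn[x Bx] /closed_underP cl | conn].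
  have nBG : G \subset 'N(B | 'P).
    rewrite gen_subG; apply/subsetP=> g /set2P[]-> ; rewrite !inE; apply/subsetP=> y By;
      by rewrite inE /= apermE; case: (cl y By).
  apply/setP=> y; rewrite in_setT; have /orbitP[g Gg <-] : y \in orbit 'P G x.
    by rewrite (atransPin (subsetT _) trG (in_setT x)).
  by rewrite (astabs_act _ (subsetP nBG _ Gg)).
apply/imsetP; exists x0 => //; apply/esym/conn; rewrite ?subsetT //.
  by apply/set0Pn; exists x0; apply: orbit_refl.
apply/closed_underP=> y /orbitP[g Gg <-].
by rewrite -!apermE -!actM !mem_orbit ?groupM.
Qed.

Section Contraction.
Variables (A : {set T}) (s t : {perm T}) (a : T).
Hypotheses (sA : fpf_involution_on A s) (tA : fpf_involution_on A t).
Hypotheses (aA : a \in A) (tas : t a != s a).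

Local Notation b := (s a).
Local Notation A' := (A :\: [set a; b]).
Local Notation s' := (s * tperm a b).
Local Notation t' := (join_pairs t a b).

Let sK := fpf_involution_onK sA.
Let tK := fpf_involution_onK tA.

Let bA : b \in A. Proof. by rewrite (fpf_involution_on_mem sA). Qed.
Let ab : a != b. Proof. by rewrite eq_sym (fpf_involution_on_neq sA). Qed.
Let s'A : fpf_involution_on A' s'. Proof. exact: fpf_involution_on_setD2. Qed.
Let t'A : fpf_involution_on A' t'. Proof. exact: fpf_involution_on_join. Qed.

Let s'E x : x \notin [set a; b] -> s' x = s x.
Proof. by move=> xab; rewrite mulg_tperm_out // mem_set2_swap. Qed.

Let t'E x : x \notin [set a; b] -> x \notin [set t a; t b] -> t' x = t x.
Proof. exact: join_pairs_out. Qed.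

Let t'c : t' (t a) = t b. Proof. exact: join_pairs_at. Qed.
Let t'd : t' (t b) = t a. Proof. by rewrite -t'c (fpf_involution_onK t'A). Qed.

Let abA' x : x \in [set a; b] -> x \notin A'. Proof. by rewrite in_setD => ->. Qed.

Let s'ab x : (s' x \in [set a; b]) = (x \in [set a; b]).
Proof.
apply: (mem_set2_fix (fpf_involution_onK s'A));
  by apply: (fpf_involution_on_out s'A); rewrite abA' ?set21 ?set22.
Qed.

Let t'ab x : (t' x \in [set a; b]) = (x \in [set a; b]).
Proof.
apply: (mem_set2_fix (fpf_involution_onK t'A));
  by apply: (fpf_involution_on_out t'A); rewrite abA' ?set21 ?set22.
Qed.

Lemma closed_under_contract B :
  closed_under s t B -> closed_under s' t' (B :\: [set a; b]).
Proof.
move=> clB; have memB x := closed_under_mem x sK tK clB.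
apply/closed_underP=> x /setDP[xB xab].
rewrite !in_setD s'ab t'ab xab s'E // (memB x).1 xB; split=> //; move: xB.
have [/set2P[]->|xcd] := boolP (x \in [set t a; t b]); last by rewrite t'E // (memB x).2.
  by rewrite t'c (memB b).2 (memB a).1 (memB a).2.
by rewrite t'd (memB b).2 (memB a).1 (memB a).2.
Qed.

Lemma closed_under_expand B : B \subset A' -> closed_under s' t' B ->
  closed_under s t (if t a \in B then [set a; b] :|: B else B).
Proof.
move=> BA' clB.
have memB x := closed_under_mem x (fpf_involution_onK s'A) (fpf_involution_onK t'A) clB.
have Bab x : x \in B -> x \notin [set a; b] by move/(subsetP BA'); rewrite in_setD => /andP[].
have sB x : x \in B -> s x \in B by move=> xB; rewrite -s'E ?Bab // (memB x).1.
have tB x : x \in B -> x \notin [set t a; t b] -> t x \in B.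
  by move=> xB xcd; rewrite -t'E ?Bab // (memB x).2.
case: ifP => cB; apply/closed_underP=> x; last first.
  move=> xB; split; rewrite ?sB // tB // in_set2 negb_or.
  apply/andP; split; first by apply: contraFneq cB => <-.
  by apply: contraFneq cB => xtb; rewrite -t'd (memB _).2 -xtb.
rewrite in_setU => /orP[/set2P[]->|xB].
- by rewrite !inE eqxx cB !orbT.
- by rewrite sK -t'c !inE (memB _).2 eqxx cB !orbT.
rewrite !inE sB ?orbT //; split=> //.
by have [/set2P[]->|xcd] := boolP (x \in [set t a; t b]); rewrite ?tK ?eqxx ?tB ?orbT.
Qed.

Lemma connected_on_contract : connected_on A s t = connected_on A' s' t'.
Proof.
have cA' : t a \in A'.
  by rewrite in_setD in_set2 negb_or tas (fpf_involution_on_neq tA) aA (fpf_involution_on_mem tA).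
apply/connected_onP/connected_onP => conn B BA B0 clB.
  pose E := if t a \in B then [set a; b] :|: B else B.
  have BE : B \subset E by rewrite /E; case: ifP => // _; apply: subsetUr.
  have <- : E :\: [set a; b] = B.
    rewrite /E; case: ifP => _; rewrite 1?setDUl ?setDv ?set0U;
      by rewrite setDE; apply/setIidPl/(subset_trans BA); rewrite setDE subsetIr.
  congr (_ :\: _); apply: conn; last exact: closed_under_expand.
    rewrite /E; case: ifP => _; last exact: subset_trans BA (subsetDl _ _).
    by rewrite subUset (subset_trans BA (subsetDl _ _)) andbT; apply/subsetP=> x /set2P[]->.
  by apply: contraNneq B0 => E0; rewrite -subset0 -E0.
have memB x := closed_under_mem x sK tK clB.
have B'A' : B :\: [set a; b] = A'.
  apply: conn; [exact: setSD | | exact: closed_under_contract].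
  case/set0Pn: B0 => y yB; apply/set0Pn.
  have [yab|yab] := boolP (y \in [set a; b]); last by exists y; rewrite in_setD yab.
  exists (t a); move: cA'; rewrite !in_setD => /andP[-> _] /=.
  by move: yB; case/set2P: yab => ->; rewrite ?(memB a).1 (memB a).2.
have inB x : x \in A' -> x \in B by rewrite -B'A' => /setDP[].
apply/eqP; rewrite eqEsubset BA; apply/subsetP=> x xA.
have [/set2P[]->|xab] := boolP (x \in [set a; b]); last by rewrite inB // in_setD xab.
  by rewrite -(memB a).2 inB.
by rewrite (memB a).1 -(memB a).2 inB.
Qed.

End Contraction.

(** * Counting *)

Definition fpf_involutions A := [set s | fpf_involution_on A s].

Definition connected_pairs A := [set st : {perm T} * {perm T} |
  [&& fpf_involution_on A st.1, fpf_involution_on A st.2 & connected_on A st.1 st.2]].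

Lemma fpf_involution_on0 s : fpf_involution_on set0 s = (s == 1).
Proof.
apply/fpf_involution_onP/eqP => [[_ s0]|->].
  by apply/permP=> x; rewrite perm1; apply/eqP/negbNE; rewrite s0 inE.
by split=> x; rewrite !perm1 ?eqxx ?inE.
Qed.

Lemma fpf_involution_on_tperm_setD2 A s a b : a \in A -> b \in A -> a != b ->
  fpf_involution_on (A :\: [set a; b]) s ->
  fpf_involution_on A (s * tperm a b) /\ (s * tperm a b) a = b.
Proof.
move=> aA bA ab sA'; have abA' x : x \in [set a; b] -> x \notin A :\: [set a; b].
  by rewrite in_setD => ->.
split; last by rewrite permM (fpf_involution_on_out sA') ?abA' ?set21 // tpermL.
have := fpf_involution_on_setU2 sA' (abA' _ (set21 a b)) (abA' _ (set22 a b)) ab.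
by rewrite setUD_subset //; apply/subsetP=> x /set2P[]->.
Qed.

Lemma card_fpf_involutions_fiber A a b : a \in A -> b \in A :\ a ->
  #|[set s in fpf_involutions A | s a == b]| = #|fpf_involutions (A :\: [set a; b])|.
Proof.
move=> aA /setD1P[ba bA]; have ab : a != b by rewrite eq_sym.
apply: (card_in_bij (f := fun s => s * tperm a b) (g := fun s => s * tperm a b));
  try by move=> s _; rewrite -mulgA tperm2 mulg1.
  by move=> s; rewrite !inE => /andP[sA /eqP <-]; apply: fpf_involution_on_setD2.
move=> s; rewrite !inE => sA'.
by have [-> ->] := fpf_involution_on_tperm_setD2 aA bA ab sA'; rewrite eqxx.
Qed.

Lemma card_fpf_involutions A k : #|A| = k.*2 -> #|fpf_involutions A| = (\prod_(i < k) i.*2.+1)%N.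
Proof.
elim: k A => [|k IH] A cardA.
  rewrite big_ord0 (cards0_eq cardA) -(cards1 (1 : {perm T})).
  by apply: eq_card => s; rewrite !inE fpf_involution_on0.
have /set0Pn[a aA] : A != set0 by rewrite -card_gt0 cardA.
rewrite (card_fibers (f := fun s => s a) (Y := A :\ a)); last first.
  move=> s; rewrite inE => sA.
  by rewrite in_setD1 (fpf_involution_on_neq sA) (fpf_involution_on_mem sA) aA.
rewrite (eq_bigr (fun _ => \prod_(i < k) i.*2.+1)%N) => [|b bA]; last first.
  by rewrite card_fpf_involutions_fiber // (IH _ _) // cardsD2_mem // cardA doubleS subn2.
by rewrite sum_nat_const big_ord_recr mulnC cardsD1_mem // cardA.
Qed.

Lemma connected_on_common_pair A s t a :
  fpf_involution_on A s -> fpf_involution_on A t -> a \in A -> t a = s a ->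
  connected_on A s t = (A :\: [set a; s a] == set0).
Proof.
move=> sA tA aA tas; have [sK tK] := (fpf_involution_onK sA, fpf_involution_onK tA).
have abA : [set a; s a] \subset A.
  by apply/subsetP=> x /set2P[]->; rewrite ?(fpf_involution_on_mem sA).
have tsa : t (s a) = a by rewrite -tas tK.
have clab : closed_under s t [set a; s a].
  by apply/closed_underP=> x /set2P[]->; rewrite ?tas ?sK ?tsa ?set21 ?set22.
rewrite setD_eq0; apply/connected_onP/idP => [conn | Aab B BA B0 clB].
  by rewrite (conn _ abA _ clab) //; apply/set0Pn; exists a; rewrite set21.
have memB x := closed_under_mem x sK tK clB.
have aB : a \in B.
  case/set0Pn: B0 => y yB; have /set2P[ya|ys] := subsetP Aab y (subsetP BA y yB).
    by rewrite -ya.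
  by rewrite -(memB a).1 -ys.
apply/eqP; rewrite eqEsubset BA (subset_trans Aab) //.
by apply/subsetP=> x /set2P[]->; rewrite ?(memB a).1.
Qed.

Lemma card_connected_pairs_fiber_eq A a b : a \in A -> b \in A :\ a ->
  #|[set st in connected_pairs A | (st.1 a == b) && (st.2 a == b)]| =
  (A :\: [set a; b] == set0).
Proof.
move=> aA bA; have F1 := card_fpf_involutions_fiber aA bA.
set F := [set s in fpf_involutions A | s a == b] in F1.
have connE s t : fpf_involution_on A s -> fpf_involution_on A t -> s a = b -> t a = b ->
    connected_on A s t = (A :\: [set a; b] == set0).
  by move=> sA tA sab tab; rewrite (connected_on_common_pair sA tA aA) ?sab.
case: eqP => [A'0|/eqP A'n].
  rewrite -[RHS]/(1 * 1)%N (_ : [set st in _ | _] = setX F F).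
    by rewrite cardsX F1 A'0 (card_fpf_involutions (k := 0)) ?cards0 // big_ord0.
  apply/setP=> -[s t]; rewrite !inE /=; apply/idP/idP.
    by case/and3P=> /and3P[-> -> _] -> ->.
  by case/and3P=> /andP[sA /eqP sab] tA /eqP tab; rewrite sA tA connE // A'0 sab tab !eqxx.
apply/eqP; rewrite /= cards_eq0; apply/eqP/setP=> -[s t]; rewrite !inE /=.
apply/negbTE/negP=> /and3P[/and3P[sA tA conn] /eqP sab /eqP tab].
by move: conn; rewrite connE // (negbTE A'n).
Qed.

Lemma card_connected_pairs_fiber_neq A a b : a \in A -> b \in A :\ a ->
  #|[set st in connected_pairs A | (st.1 a == b) && (st.2 a != b)]| =
  (#|connected_pairs (A :\: [set a; b])| * #|A :\: [set a; b]|)%N.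
Proof.
move=> aA /setD1P[ba bA]; have ab : a != b by rewrite eq_sym.
rewrite -cardsX.
apply: (card_in_bij
  (f := fun st : {perm T} * {perm T} => ((st.1 * tperm a b, join_pairs st.2 a b), st.2 a))
  (g := fun y => (y.1.1 * tperm a b, split_pair y.1.2 a b y.2))).
- move=> [s t]; rewrite !inE /= => /and3P[/and3P[sA tA conn] /eqP sab tab]; subst b.
  rewrite fpf_involution_on_setD2 // fpf_involution_on_join // -connected_on_contract //.
  by rewrite conn (negbTE tab) orbF (fpf_involution_on_neq tA) aA (fpf_involution_on_mem tA).
- move=> [[s t] c]; rewrite in_setX /= => /andP[]; rewrite inE => /and3P[sA tA conn] cA'.
  rewrite !inE /=.
  have [s'A s'a] := fpf_involution_on_tperm_setD2 aA bA ab sA.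
  have t'A := fpf_involution_on_split aA bA ab tA cA'.
  have [t'a _] := split_pair_at ab tA cA'.
  have cb : c != b by move: cA'; rewrite in_setD in_set2 negb_or => /andP[/andP[]].
  rewrite s'A t'A s'a t'a cb eqxx (connected_on_contract s'A t'A aA) ?s'a ?t'a //.
  by rewrite /= -mulgA tperm2 mulg1 (split_pairK ab tA cA') conn.
- move=> [s t]; rewrite !inE /= => /and3P[/and3P[_ tA _] _ tab].
  by rewrite -mulgA tperm2 mulg1 (join_pairsK ab (fpf_involution_onK tA)).
move=> [[s t] c]; rewrite in_setX /= => /andP[]; rewrite inE => /and3P[_ tA _] cA'.
by rewrite -mulgA tperm2 mulg1 (split_pairK ab tA cA') (split_pair_at ab tA cA').1.
Qed.

Lemma card_connected_pairs_fiber A a b : a \in A -> b \in A :\ a ->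
  #|[set st in connected_pairs A | st.1 a == b]| =
  ((A :\: [set a; b] == set0) + #|connected_pairs (A :\: [set a; b])| * #|A :\: [set a; b]|)%N.
Proof.
move=> aA bA; rewrite -(cardsID [set st : {perm T} * {perm T} | st.2 a == b]).
rewrite -card_connected_pairs_fiber_eq -?card_connected_pairs_fiber_neq //.
congr (_ + _)%N; apply: eq_card => st; rewrite !inE;
  by case: (st.2 a == b); rewrite /= -!andbA ?andbF ?andbT.
Qed.

Lemma card_connected_pairs A k : #|A| = k.*2 -> #|connected_pairs A| = (k.*2).-1`!.
Proof.
elim: k A => [|k IH] A cardA.
  rewrite (cards0_eq cardA) (_ : (0.*2).-1`! = 1)%N // -(cards1 ((1, 1) : {perm T} * {perm T})).
  apply: eq_card => -[s t]; rewrite !inE !fpf_involution_on0 xpair_eqE /=.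
  by case: (s == 1) (t == 1) => [] [] //=; apply/connected_onP=> B; rewrite subset0 => /eqP.
have /set0Pn[a aA] : A != set0 by rewrite -card_gt0 cardA.
rewrite (card_fibers (f := fun st : {perm T} * {perm T} => st.1 a) (Y := A :\ a)); last first.
  move=> [s t]; rewrite inE => /and3P[sA _ _].
  by rewrite in_setD1 (fpf_involution_on_neq sA) (fpf_involution_on_mem sA) aA.
rewrite (eq_bigr (fun _ => (k == 0) + (k.*2).-1`! * k.*2)%N) => [|b bA]; last first.
  have cardA' : #|A :\: [set a; b]| = k.*2 by rewrite cardsD2_mem // cardA doubleS subn2.
  by rewrite card_connected_pairs_fiber // (IH _ cardA') -cards_eq0 cardA' double_eq0.
rewrite sum_nat_const cardsD1_mem // cardA doubleS /= factS.
congr (_ * _)%N; case: k {IH cardA} => [|k] //=.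
by rewrite doubleS factS mulnC.
Qed.

End FpfInvolutions.

(** * The probability p(k) *)

Lemma fpf_involutionE n (s : 'S_n) : fpf_involution s = fpf_involution_on [set: 'I_n] s.
Proof.
congr (_ && _); apply/forallP/eqP => [sf|sT x]; first by apply/setP=> x; rewrite !inE sf.
by have := in_setT x; rewrite -sT inE.
Qed.

Lemma card_fpf_pairs k : #|fpf_pairs k| = (\prod_(i < k) i.*2.+1) ^ 2.
Proof.
rewrite (_ : fpf_pairs k = setX (fpf_involutions setT) (fpf_involutions setT)).
  by rewrite cardsX (card_fpf_involutions (k := k)) ?cardsT ?card_ord.
by apply/setP=> -[s t]; rewrite !inE /= !fpf_involutionE.
Qed.

Lemma card_transitive_fpf_pairs k : 0 < k -> #|transitive_fpf_pairs k| = (k.*2).-1`!.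
Proof.
move=> k_gt0; have x0 : 'I_(k.*2) by exists 0; rewrite double_gt0.
rewrite (_ : transitive_fpf_pairs k = connected_pairs setT).
  by rewrite (card_connected_pairs (k := k)) ?cardsT ?card_ord.
apply/setP=> -[s t]; rewrite !inE /= !fpf_involutionE.
by rewrite (transitive_connected x0) andbA.
Qed.

Import Order.TTheory GRing.Theory Num.Theory.
Local Open Scope ring_scope.

Lemma p_transE (R : numFieldType) k : (0 < k)%N ->
  p_trans R k = ((k.*2).-1`!)%:R / ((\prod_(i < k) i.*2.+1) ^ 2)%N%:R.
Proof. by move=> k_gt0; rewrite /p_trans card_transitive_fpf_pairs // card_fpf_pairs. Qed.

Lemma p_trans1 (R : numFieldType) : p_trans R 1 = 1.
Proof. by rewrite p_transE // big_ord1 divr1. Qed.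

Lemma p_transS (R : numFieldType) k : (0 < k)%N ->
  p_trans R k.+1 * (2 * k%:R + 1) = p_trans R k * (2 * k%:R).
Proof.
case: k => // k _; rewrite !p_transE // big_ord_recr /=.
set P := (\prod_(i < k.+1) _)%N; rewrite doubleS /= !factS.
have P_gt0 : (0 < P)%N by rewrite prodn_gt0.
set x : R := k%:R.
have natrE n : (k.*2 + n)%:R = 2 * x + n%:R :> R by rewrite natrD -mul2n natrM.
rewrite !natrX !natrM -[k.*2.+3]addn3 -[k.*2.+2]addn2 -[k.*2.+1]addn1 !natrE -natr1.
have P0 : P%:R != 0 :> R by rewrite pnatr_eq0 -lt0n.
by field; rewrite P0 -natrE pnatr_eq0 addn3.
Qed.

Lemma sq_bounds_step (R : realFieldType) (n x y : R) : 1 <= n ->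
  y * (2 * n + 1) = x * (2 * n) ->
  n * x ^+ 2 <= 1 -> 1 + x ^+ 2 <= 2 * n * x ^+ 2 ->
  (n + 1) * y ^+ 2 <= 1 /\ 1 + y ^+ 2 <= 2 * (n + 1) * y ^+ 2.
Proof.
(* Multiply by (2n+1)^2, and use 4n(n+1) <= (2n+1)^2 and (2n-1)(2n+1) <= 4n^2. *)
move=> n1 yx U L; have yx2 : y ^+ 2 * (2 * n + 1) ^+ 2 = x ^+ 2 * (2 * n) ^+ 2.
  by rewrite -!exprMn yx.
split; nra.
Qed.

Lemma p_trans_ge0 (R : numFieldType) k : 0 <= p_trans R k.
Proof. by rewrite divr_ge0 ?ler0n. Qed.

Lemma p_trans_sq_bounds (R : realFieldType) k : (0 < k)%N ->
  k%:R * p_trans R k ^+ 2 <= 1 /\ 1 + p_trans R k ^+ 2 <= 2 * k%:R * p_trans R k ^+ 2.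
Proof.
elim: k => // -[_ _|k IH _]; first by rewrite p_trans1; lra.
have [U L] := IH isT; rewrite -natr1.
by apply: sq_bounds_step U L; rewrite ?ler1n // p_transS.
Qed.

Lemma bounds_of_sq_bounds (R : rcfType) (n p : R) : 0 < n -> 0 <= p ->
  n * p ^+ 2 <= 1 -> 1 + p ^+ 2 <= 2 * n * p ^+ 2 ->
  (1 / 2) / Num.sqrt n <= p /\ p <= 1 / Num.sqrt n.
Proof.
move=> n_gt0 p_ge0 U L; have r_gt0 : 0 < Num.sqrt n by rewrite sqrtr_gt0.
have r2 : Num.sqrt n ^+ 2 = n by rewrite sqr_sqrtr // ltW.
rewrite ler_pdivrMr // ler_pdivlMr //.
have y_ge0 : 0 <= p * Num.sqrt n by rewrite mulr_ge0 // ltW.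
have y2 : (p * Num.sqrt n) ^+ 2 = n * p ^+ 2 by rewrite exprMn r2 mulrC.
move: (p * Num.sqrt n) y_ge0 y2 => y y_ge0 y2; split; nra.
Qed.

Theorem lemma2p1 (R : rcfType) :
  exists a b : R, 0 < a /\ a < b /\
    forall k : nat, (1 <= k)%N ->
      a / Num.sqrt (k%:R) <= p_trans R k /\ p_trans R k <= b / Num.sqrt (k%:R).
Proof.
exists (1 / 2), 1; split; [lra | split; [lra | ]].
move=> k k_gt0; have [U L] := p_trans_sq_bounds R k_gt0.
by apply: bounds_of_sq_bounds; rewrite ?ltr0n ?p_trans_ge0.
Qed.
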